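(* The parameterized problem Multicolored Independent Set does not belong to LOCAL-FPT. That is, there is no computable function $f$ and no LOCAL algorithm that, on every instance $(G,k)$ of Multicolored Independent Set, terminates within $f(k)$ rounds and decides correctly (with disjunctive acceptance) whether $(G,k)$ is a yes-instance.
   Context: Distributed models. A network is a finite connected undirected graph $G$ with $n=|V(G)|$ nodes; every node has a unique identifier of $O(\log n)$ bits. Initially each node knows only its own identifier, the identifiers of its neighbours, its own input labels, and the parameter $k$. Computation proceeds in synchronous rounds; in each round each node performs arbitrary local computation, sends messages and receives the messages sent to it. In the LOCAL model messages to neighbours have unbounded size. The running time is the number of rounds until all nodes have terminated. For $s,t\in\mathbb N$, $\mathcal G_{s,t}$ denotes the set of finite connected graphs $G$ equipped with unary predicates $P_1,\dots,P_s\subseteq V(G)$ and binary predicates $E_1,\dots,E_t\subseteq V(G)^2$. A parameterized decision problem is a set $\mathsf P\subseteq\mathcal G_{s,t}\times\mathbb N$; instances are pairs $(G,k)$, $k$ being the parameter. A distributed algorithm decides $\mathsf P$ if on every instance $(G,k)$ (run on network $G$, every node knowing $k$) every node terminates with output accept or reject, and $(G,k)\in\mathsf P$ iff at least one node accepts. LOCAL-FPT is the class of parameterized problems decided by a LOCAL algorithm that terminates within $f(k)$ rounds on every instance $(G,k)$, for some computable function $f$. Multicolored Independent Set: an instance is an integer $k\ge 1$ and a graph $G\in\mathcal G_{k,1}$ (the binary predicate being the edge relation), where each vertex lies in at most one of the colour classes $P_1,\dots,P_k$; it is a yes-instance iff there are vertices $v_1\in P_1,\dots,v_k\in P_k$ that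 are pairwise non-adjacent. The parameter is $k$. *)

From mathcomp Require Import all_boot.
Set Implicit Arguments. Unset Strict Implicit. Unset Printing Implicit Defensive.

Inductive code : Type :=
| CZero
| CSucc
| CProj of nat                (* i-th argument (0-based) *)
| CComp of code & seq code
| CPrec of code & code        (* primitive recursion on the first argument *)
| CMu of code.                (* unbounded minimisation on the first argument *)

Inductive eval : code -> seq nat -> nat -> Prop :=
| eZero xs : eval CZero xs 0
| eSucc x xs : eval CSucc (x :: xs) x.+1
| eProj i xs : i < size xs -> eval (CProj i) xs (nth 0 xs i)
| eComp g hs xs ys y : evals hs xs ys -> eval g ys y -> eval (CComp g hs) xs y
| ePrec0 g h xs y : eval g xs y -> eval (CPrec g h) (0 :: xs) y
| ePrecS g h n xs r y :
    eval (CPrec g h) (n :: xs) r -> eval h (n :: r :: xs) y ->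
    eval (CPrec g h) (n.+1 :: xs) y
| eMu g xs n : eval g (n :: xs) 0 -> evalsPos g xs n -> eval (CMu g) xs n
with evals : seq code -> seq nat -> seq nat -> Prop :=
| evNil xs : evals [::] xs [::]
| evCons h hs xs y ys : eval h xs y -> evals hs xs ys -> evals (h :: hs) xs (y :: ys)
(* evalsPos g xs n : g(m, xs) is defined and nonzero for every m < n *)
with evalsPos : code -> seq nat -> nat -> Prop :=
| epZ g xs : evalsPos g xs 0
| epS g xs n y : evalsPos g xs n -> eval g (n :: xs) y.+1 -> evalsPos g xs n.+1.

Definition computable (f : nat -> nat) : Prop :=
  exists c : code, forall n, eval c [:: n] (f n).

(* A network: finite connected simple graph on a finType V (edge relation adj,
   which is also the binary predicate E_1), colour classes P_1..P_k given as
   P : 'I_k -> pred V (P i is P_(i+1)), each vertex in at most one class. *)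
Definition mis_instance (k : nat) (V : finType) (adj : rel V) (P : 'I_k -> pred V) : Prop :=
  [/\ 1 <= k, 0 < #|V|,
      (forall u v, adj u v = adj v u) /\ (forall v, ~~ adj v v),
      (forall u v, connect adj u v) &
      (forall v (i j : 'I_k), P i v -> P j v -> i = j)].

Definition mis_yes (k : nat) (V : finType) (adj : rel V) (P : 'I_k -> pred V) : Prop :=
  exists f : 'I_k -> V,
    (forall i, P i (f i)) /\ (forall i j, i != j -> ~~ adj (f i) (f j)).

(* Identifiers: injective, of O(log n) bits, i.e. below n^c. *)
Definition valid_ids (c : nat) (V : finType) (id : V -> nat) : Prop :=
  injective id /\ forall v, id v < #|V| ^ c.

(* A node's state space and message space are arbitrary (unbounded messages,
   arbitrary local computation). Initially a node knows k, its identifier, the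
   (sorted) list of its neighbours' identifiers and its input labels
   [:: v \in P_1; ...; v \in P_k].  In each round every non-terminated node
   sends to each neighbour (addressed by identifier) a message computed from its
   state, receives the list of (sender id, message) pairs from its active
   neighbours (sorted by sender id) and updates its state.  A node has
   terminated once [output] of its state is [Some b] (b = accept); terminated
   nodes keep their state and send nothing. *)
Record LocalAlg := {
  St : Type;
  Msg : Type;
  init : nat -> nat -> seq nat -> seq bool -> St;   (* k, id, nbr ids, labels *)
  send : St -> nat -> Msg;                         (* state, recipient id *)
  step : St -> seq (nat * Msg) -> St;
  output : St -> option bool }.
Arguments init : clear implicits.
Arguments send : clear implicits.
Arguments step : clear implicits.
Arguments output : clear implicits.

Section Run.
Variables (A : LocalAlg) (k : nat) (V : finType) (adj : rel V) (P : 'I_k -> pred V)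
          (id : V -> nat).

Definition labels (v : V) : seq bool := [seq P i v | i <- enum 'I_k].

Definition nbr_ids (v : V) : seq nat := sort leq [seq id u | u <- enum V & adj v u].

Definition sorted_nbrs (v : V) : seq V :=
  sort (fun u w => id u <= id w) [seq u <- enum V | adj v u].

Fixpoint state (r : nat) : V -> St A :=
  match r with
  | 0 => fun v => init A k (id v) (nbr_ids v) (labels v)
  | r'.+1 =>
      let prev := state r' in
      fun v =>
        let s := prev v in
        if output A s is Some _ then s
        else step A s [seq (id u, send A (prev u) (id v)) |
                        u <- sorted_nbrs v & output A (prev u) == None]
  end.

Definition decides_within (T : nat) (yes : Prop) : Prop :=
  (forall v, output A (state T v) <> None) /\
  (yes <-> exists v, output A (state T v) = Some true).
End Run.

From mathcomp Require Import all_boot.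
From mathcomp Require Import zify.
Set Implicit Arguments. Unset Strict Implicit. Unset Printing Implicit Defensive.

(* The argument is the classical indistinguishability one.  After r rounds the
   state of a node depends only on the input labels within distance r of it
   (lemma [state_local]).  Fix k = 2 and T = f 2, and look at the path on
   N = 2T + 3 nodes with identifiers 0, ..., N-1, where colour class P_1 may
   contain the first node and P_2 the last one.  Both colours present gives a
   yes-instance (the end nodes are far apart), and dropping either colour
   gives a no-instance.  On the yes-instance some node v accepts at round T.
   Since N > 2T + 2, v is at distance > T from one end of the path; removing
   the colour at that end changes nothing within distance T of v, so v still
   accepts on a no-instance — a contradiction. *)

Section Locality.
Variables (A : LocalAlg) (k : nat) (V : finType) (adj : rel V) (id : V -> nat).
Variables P1 P2 : 'I_k -> pred V.

Fixpoint agree_within (r : nat) (v : V) : Prop :=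
  (forall i, P1 i v = P2 i v) /\
  if r is r'.+1 then forall u, adj v u -> agree_within r' u else True.

Lemma agree_within_pred r v : agree_within r.+1 v -> agree_within r v.
Proof.
elim: r v => [|r IH] v [eq_v agree_nbrs]; split=> // u /agree_nbrs.
exact: IH.
Qed.

Lemma state_local r v :
  agree_within r v -> state A adj P1 id r v = state A adj P2 id r v.
Proof.
elim: r v => [|r IH] v.
  case=> eq_v _ /=; congr (init _ _ _ _ _).
  by apply: eq_map => i; rewrite eq_v.
move=> agree_v; have same_v := IH v (agree_within_pred agree_v).
case: agree_v => _ agree_nbrs.
have same_nbrs u : u \in sorted_nbrs adj id v ->
    state A adj P1 id r u = state A adj P2 id r u.
  by rewrite mem_sort mem_filter => /andP [/agree_nbrs/IH].
rewrite /= same_v; case: (output A _) => //.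
congr (step _ _ _).
rewrite (eq_in_filter (a2 := fun u => output A (state A adj P2 id r u) == None));
  last by move=> u /same_nbrs ->.
by apply/eq_in_map => u; rewrite mem_filter => /andP [_ /same_nbrs ->].
Qed.
End Locality.

Definition path_adj (N : nat) : rel 'I_N :=
  fun u v => (u.+1 == v :> nat) || (v.+1 == u :> nat).

Definition path_colours (N : nat) (first last : bool) : 'I_2 -> pred 'I_N :=
  fun i v => if i == ord0 then first && (v == 0 :> nat)
             else last && (v == N.-1 :> nat).

Arguments path_adj : clear implicits.
Arguments path_colours : clear implicits.

Lemma path_connected N (u v : 'I_N) : connect (path_adj N) u v.
Proof.
have sym : connect_sym (path_adj N).
  by apply: sym_connect_sym => x y; rewrite /path_adj orbC.
suff down (w : 'I_N) m (m_lt : m < N) : m <= w -> connect (path_adj N) (Ordinal m_lt) w.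
  have ord_eta (w : 'I_N) : w = Ordinal (ltn_ord w) by exact: val_inj.
  have [le_uv|/ltnW le_vu] := leqP u v; first by rewrite [u]ord_eta; exact: down.
  by rewrite sym [v]ord_eta; exact: down.
case: w => n n_lt; elim: n n_lt => [|n IH] n_lt /= le_mn.
  by rewrite (_ : Ordinal m_lt = Ordinal n_lt) //; apply: val_inj => /=; lia.
rewrite leq_eqVlt in le_mn; case/orP: le_mn => [/eqP eq_mn|lt_mn].
  by rewrite (_ : Ordinal m_lt = Ordinal n_lt) //; exact: val_inj.
have n_lt' : n < N by lia.
apply: connect_trans (IH n_lt' lt_mn) _.
by apply: connect1; rewrite /path_adj /= eqxx.
Qed.

Lemma path_instance N first last :
  3 <= N -> mis_instance (path_adj N) (path_colours N first last).
Proof.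
move=> N_ge3; split=> //.
- by rewrite card_ord; lia.
- split=> [u v|v]; first by rewrite /path_adj orbC.
  by rewrite /path_adj; apply/negP => /orP [] /eqP; lia.
- exact: path_connected.
- move=> v [[|[|i]] lt_i] // [[|[|j]] lt_j] //= Pi Pj; apply: val_inj => //=.
  all: by move: Pi Pj; rewrite /path_colours /= => /andP [_ /eqP] ? /andP [_ /eqP]; lia.
Qed.

Lemma path_ids c N : 1 <= c -> valid_ids c (fun v : 'I_N => val v).
Proof.
move=> c_ge1; split=> [|v]; first exact: val_inj.
rewrite card_ord; apply: leq_trans (ltn_ord v) _.
by rewrite -{1}(expn1 N) leq_pexp2l //; case: v; lia.
Qed.

Lemma path_yes N first last :
  3 <= N -> mis_yes (path_adj N) (path_colours N first last) <-> first && last.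
Proof.
move=> N_ge3; split.
  case=> g [in_class _].
  move: (in_class ord0) (in_class (Ordinal (isT : 1 < 2))).
  by rewrite /path_colours /= => /andP [-> _] /andP [-> _].
case/andP=> -> ->.
have lt0 : 0 < N by lia.
have ltN : N.-1 < N by lia.
exists (fun i : 'I_2 => if i == ord0 then Ordinal lt0 else Ordinal ltN); split.
  by case=> [[|[|i]] lt_i] //; rewrite /path_colours /=.
case=> [[|[|i]] lt_i] //; case=> [[|[|j]] lt_j] //= _;
  rewrite /path_adj /=; lia.
Qed.

Lemma path_agree_within N k (P1 P2 : 'I_k -> pred 'I_N) r (v : 'I_N) :
  (forall u : 'I_N, v - r <= u <= v + r -> forall i, P1 i u = P2 i u) ->
  agree_within (path_adj N) P1 P2 r v.
Proof.
elim: r v => [|r IH] v agree; (split; first by apply: agree; lia) => // u.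
rewrite /path_adj => /orP [] /eqP adj_vu; apply: IH => w /andP [lo hi]; apply: agree; lia.
Qed.

Theorem mainTheorem1 :
  forall c : nat, 1 <= c ->
  ~ exists (f : nat -> nat) (A : LocalAlg),
      computable f /\
      forall (k : nat) (V : finType) (adj : rel V) (P : 'I_k -> pred V) (id : V -> nat),
        mis_instance adj P -> valid_ids c id ->
        decides_within A adj P id (f k) (mis_yes adj P).
Proof.
move=> c c_ge1 [f [A [_ decides]]].
set T := f 2; set N := T.*2.+3; have N_ge3 : 3 <= N by lia.
set id := fun v : 'I_N => val v.
have decide first last :=
  (decides 2 _ _ _ id (path_instance first last N_ge3) (path_ids N c_ge1)).2.
have transfer first last v :
    agree_within (path_adj N) (path_colours N true true) (path_colours N first last) T v ->
    output A (state A (path_adj N) (path_colours N true true) id T v) = Some true ->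
    first && last.
  move=> agree acc; apply/(path_yes first last N_ge3)/(decide first last).
  by exists v; rewrite -(state_local A id agree).
have [v acc] := (decide true true).1 ((path_yes true true N_ge3).2 isT).
have [far_from_0|near_0] := ltnP T v.
- suff: false by []; apply: (transfer false true v _ acc); apply: path_agree_within => u range i.
  by rewrite /path_colours (_ : (u == 0 :> nat) = false) ?andbF //; apply/eqP; lia.
- suff: false by []; apply: (transfer true false v _ acc); apply: path_agree_within => u range i.
  by rewrite /path_colours (_ : (u == N.-1 :> nat) = false) ?andbF //; apply/eqP; lia.
Qed.
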